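(* For all unitary modified types $\boldsymbol\mu,\boldsymbol\nu,\boldsymbol\lambda$, the structure constant polynomial $r_{\boldsymbol\mu,\boldsymbol\nu}^{\boldsymbol\lambda}\in\mathbb{Q}[x]$ has degree in $x$ at most $2(|\boldsymbol\mu|+|\boldsymbol\nu|-|\boldsymbol\lambda|)$ (so it vanishes if $|\boldsymbol\lambda|>|\boldsymbol\mu|+|\boldsymbol\nu|$).
   Context: $q$ is a fixed prime power, $\sigma(z)=z^q$ on $\mathbb{F}_{q^2}$. $U_n(\mathbb{F}_q)=\{g\in GL_n(\mathbb{F}_{q^2}): g^T\sigma(g)=\mathrm{Id}\}$, embedded in $U_{n+1}(\mathbb{F}_q)$ by $g\mapsto\operatorname{diag}(g,1)$. Elements $g\in U_n(\mathbb{F}_q)$, $g'\in U_{n'}(\mathbb{F}_q)$ have the same unitary modified type if for some $N\ge n,n'$ their images in $U_N(\mathbb{F}_q)$ are conjugate in $U_N(\mathbb{F}_q)$; a unitary modified type is such an equivalence class, and its size $|\boldsymbol\mu|$ is $\operatorname{rank}(g-\mathrm{Id})$ for $g$ in the class. $X_{\boldsymbol\mu,n}$ is the sum of all elements of $U_n(\mathbb{F}_q)$ of modified type $\boldsymbol\mu$. $[n]_{-q}=((-q)^n-1)/(-q-1)$. The polynomials $r_{\boldsymbol\mu,\boldsymbol\nu}^{\boldsymbol\lambda}\in\mathbb{Q}[x]$ are those with $X_{\boldsymbol\mu,n}X_{\boldsymbol\nu,n}=\sum_{\boldsymbol\lambda}r_{\boldsymbol\mu,\boldsymbol\nu}^{\boldsymbol\lambda}([n]_{-q})X_{\boldsymbol\lambda,n}$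 for all $n\ge0$. *)

From HB Require Import structures.
From mathcomp Require Import all_boot all_order all_algebra all_field.
From mathcomp Require Import boolp.
Set Implicit Arguments. Unset Strict Implicit. Unset Printing Implicit Defensive.
Import Order.TTheory GRing.Theory Num.Theory.
Local Open Scope ring_scope.

(* F plays the role of F_{q^2} (a finite field with #|F| = q^2);
   sigma z = z^q is its Frobenius involution. *)
Section Unitary.
Variables (F : finFieldType) (q : nat).

Definition sigma (z : F) : F := z ^+ q.

Definition unitary (n : nat) (g : 'M[F]_n) : bool :=
  g^T *m map_mx sigma g == 1%:M.

(* the embedding g |-> diag(g, Id) of 'M_n into 'M_N (for n <= N) *)
Definition embed (n N : nat) (g : 'M[F]_n) : 'M[F]_N :=
  \matrix_(i < N, j < N)
    match (insub (val i) : option 'I_n), (insub (val j) : option 'I_n) with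
    | Some i', Some j' => g i' j'
    | _, _ => if val i == val j then 1 else 0
    end.

Definition same_type (n n' : nat) (g : 'M[F]_n) (g' : 'M[F]_n') : Prop :=
  exists N : nat, [/\ (n <= N)%N, (n' <= N)%N &
    exists h : 'M[F]_N, unitary h /\
      embed N g' = h *m embed N g *m invmx h].

(* a unitary modified type, given by a representative element *)
Record utype := UType { ut_n : nat; ut_g : 'M[F]_ut_n; ut_unitary : unitary ut_g }.

Definition usize (mu : utype) : nat := \rank (ut_g mu - 1%:M).

Definition has_type (n : nat) (g : 'M[F]_n) (mu : utype) : Prop :=
  unitary g /\ same_type (ut_g mu) g.

(* X_{mu,n}, as an element of the group algebra Q[U_n], viewed as a function
   on 'M_n supported on U_n *)
Definition X (mu : utype) (n : nat) : {ffun 'M[F]_n -> rat} :=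
  [ffun g => if `[< has_type g mu >] then 1 else 0].

Definition galg_mul (n : nat) (f1 f2 : {ffun 'M[F]_n -> rat}) :
    {ffun 'M[F]_n -> rat} :=
  [ffun g => \sum_(a : 'M[F]_n) \sum_(b : 'M[F]_n | a *m b == g) f1 a * f2 b].

End Unitary.

Definition qint (q n : nat) : rat :=
  ((- (q%:R)) ^+ n - 1) / (- (q%:R) - 1).

(* r is the structure constant polynomial r_{mu,nu}^lambda: for every n >= 0,
   the coefficient of X_{lambda,n} in X_{mu,n} X_{nu,n} is r([n]_{-q}).
   Since the X_{lambda,n} have disjoint supports, this coefficient is the
   value of the product at any g in U_n of type lambda (there is no
   condition when no element of U_n has type lambda, as then X_{lambda,n}=0). *)
Definition is_struct_const (F : finFieldType) (q : nat)
    (mu nu lam : utype F q) (r : {poly rat}) : Prop :=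
  forall (n : nat) (g : 'M[F]_n), has_type g lam ->
    galg_mul (X mu n) (X nu n) g = r.[qint q n].

From HB Require Import structures.
From mathcomp Require Import all_boot all_order all_algebra all_field all_fingroup all_solvable.
From mathcomp Require Import boolp zify.
Import Order.TTheory GRing.Theory Num.Theory.
Set Implicit Arguments. Unset Strict Implicit. Unset Printing Implicit Defensive.
Local Open Scope ring_scope.

(* Fix g of type lam in U_n.  The value r([n]_{-q}) counts the a in U_n of
   type mu such that a^-1 g has type nu.  Writing k, l, m for the sizes of
   mu, nu, lam, the column space of a - 1 lies in that of g - 1 plus a
   subspace of dimension at most k + l - m, and unitarity forces
   a - 1 = W^T M sigma(W) for a basis W of that column space.  Hence a is
   determined by data of bounded size together with a (k + l - m) x n matrix,
   so r([n]_{-q}) = O(q^(2(k + l - m) n)); as |[n]_{-q}| grows like q^n, the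
   degree of r is at most 2(k + l - m).  If m > k + l there is no such a at
   all, and r vanishes at infinitely many points. *)

Section PolyGrowth.
Variable R : realFieldType.

Lemma norm_lead_term_le (p : {poly R}) (x : R) : p != 0 -> 1 <= `|x| ->
  `|lead_coef p| * `|x| ^+ (size p).-1 <=
  `|p.[x]| + (\sum_(i < (size p).-1) `|p`_i|) * `|x| ^+ (size p).-2.
Proof.
move=> p_neq0 x_ge1; set e := (size p).-1.
have size_p : size p = e.+1 by rewrite prednK // size_poly_gt0.
have horner_lead : p.[x] = \sum_(i < e) p`_i * x ^+ i + lead_coef p * x ^+ e.
  by rewrite horner_coef size_p big_ord_recr lead_coefE size_p.
have low_le : `|\sum_(i < e) p`_i * x ^+ i| <= (\sum_(i < e) `|p`_i|) * `|x| ^+ e.-1.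
  apply: le_trans (ler_norm_sum _ _ _) _; rewrite mulr_suml.
  apply: ler_sum => i _; rewrite normrM normrX ler_wpM2l //.
  by apply: ler_weXn2l => //; have := ltn_ord i; lia.
rewrite -normrX -normrM (_ : lead_coef p * _ = p.[x] - \sum_(i < e) p`_i * x ^+ i).
  by apply: le_trans (ler_normB _ _) _; rewrite lerD2l.
by rewrite horner_lead addrC addKr.
Qed.

Lemma size_poly_le_of_bound (p : {poly R}) (C : R) (d : nat) :
  p != 0 -> 0 <= C ->
  (forall B, exists2 x, B <= `|x| & `|p.[x]| <= C * `|x| ^+ d) ->
  ((size p).-1 <= d)%N.
Proof.
move=> p_neq0 C_ge0 unbounded; rewrite leqNgt; apply/negP => d_lt.
set S := \sum_(i < (size p).-1) `|p`_i|.
have S_ge0 : 0 <= S by exact: sumr_ge0.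
have lead_gt0 : 0 < `|lead_coef p| by rewrite normr_gt0 lead_coef_eq0.
have [x] := unbounded (Num.max 1 ((C + S) / `|lead_coef p| + 1)).
rewrite ge_max => /andP [x_ge1 x_big] p_le.
have x_pow_gt0 : 0 < `|x| ^+ (size p).-2 by rewrite exprn_gt0 // (lt_le_trans ltr01).
have : `|lead_coef p| * `|x| * `|x| ^+ (size p).-2 <= (C + S) * `|x| ^+ (size p).-2.
  rewrite -mulrA -exprS prednK; last by lia.
  apply: le_trans (norm_lead_term_le p_neq0 x_ge1) _.
  rewrite mulrDl lerD2r; apply: le_trans p_le _.
  by rewrite ler_wpM2l // ler_weXn2l //; lia.
rewrite ler_pM2r // mulrC -ler_pdivlMr // => x_le.
by move: x_big; rewrite leNgt (le_lt_trans x_le) // ltrDl.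
Qed.

End PolyGrowth.

Lemma norm_qint_ge (q n : nat) : (0 < q)%N ->
  (q ^ n)%:R - 1 <= (q + 1)%:R * `|qint q n|.
Proof.
move=> q_gt0; rewrite /qint normf_div.
have -> : `|- (q%:R : rat) - 1| = (q + 1)%:R.
  by rewrite -opprD normrN natr1 normr_nat addn1.
rewrite mulrC divfK ?pnatr_eq0 ?addn1 //.
apply: le_trans (lerB_dist _ _).
by rewrite normrX normrN normr_nat normr1 natrX.
Qed.

Lemma exp_le_norm_qint (q n : nat) : (0 < q)%N -> 1 <= `|qint q n| ->
  (q ^ n)%:R <= (q + 2)%:R * `|qint q n|.
Proof.
move=> q_gt0 qint_ge1.
have := norm_qint_ge n q_gt0; rewrite lerBlDr => /le_trans; apply.
have -> : (q + 2)%:R = (q + 1)%:R + 1 :> rat by rewrite natr1 addn1 addn2.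
by rewrite mulrDl mul1r lerD2l.
Qed.

Lemma qint_unbounded (q : nat) (B : rat) (n0 : nat) : (1 < q)%N ->
  exists2 n, (n0 <= n)%N & B <= `|qint q n|.
Proof.
move=> q_gt1; set y := (q + 1)%:R * `|B| + 1.
have y_ge0 : 0 <= y by rewrite addr_ge0 ?mulr_ge0.
exists (n0 + Num.bound y)%N; first exact: leq_addr.
have lt_y : y < (q ^ (n0 + Num.bound y))%:R.
  apply: lt_le_trans (archi_boundP y_ge0) _; rewrite ler_nat.
  exact: leq_trans (leq_addl _ _) (ltnW (ltn_expl _ q_gt1)).
apply: le_trans (ler_norm B) _.
rewrite -(ler_pM2l (_ : 0 < (q + 1)%:R)); last by rewrite ltr0n addn1.
apply: le_trans (norm_qint_ge _ (ltnW q_gt1)).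
by rewrite lerBrDr ltW.
Qed.

Lemma size_poly_le_of_qint_bound (r : {poly rat}) (q : nat) (C : rat) (d n0 : nat) :
  (1 < q)%N -> 0 <= C -> r != 0 ->
  (forall n, (n0 <= n)%N -> `|r.[qint q n]| <= C * ((q ^ 2) ^ (d * n))%:R) ->
  ((size r).-1 <= 2 * d)%N.
Proof.
move=> q_gt1 C_ge0 r_neq0 r_le.
apply: (size_poly_le_of_bound (C := C * ((q + 2) ^ (2 * d))%:R)) => // [|B].
  exact: mulr_ge0.
have [n le_n0] := qint_unbounded (Num.max 1 B) n0 q_gt1.
rewrite ge_max => /andP [qint_ge1 B_le].
exists (qint q n) => //; apply: le_trans (r_le n le_n0) _.
have -> : ((q ^ 2) ^ (d * n))%:R = ((q ^ n)%:R) ^+ (2 * d) :> rat.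
  by rewrite -natrX -!expnM mulnA (mulnC n).
rewrite -mulrA ler_wpM2l // [X in _ <= X * _]natrX -exprMn lerXn2r ?nnegrE ?mulr_ge0 //.
exact: exp_le_norm_qint (ltnW q_gt1) qint_ge1.
Qed.

Lemma poly_eq0_of_qint_roots (r : {poly rat}) (q n0 : nat) : (1 < q)%N ->
  (forall n, (n0 <= n)%N -> r.[qint q n] = 0) -> r = 0.
Proof.
move=> q_gt1 r_roots; case: (eqVneq r 0) => // r_neq0.
have /size1_polyC r_const : (size r <= 1)%N.
  have : ((size r).-1 <= 2 * 0)%N.
    apply: (size_poly_le_of_qint_bound (C := 0) (n0 := n0) q_gt1) => // n /r_roots ->.
    by rewrite normr0 mul0r.
  by case: (size r) => [|[|]].
have := r_roots n0 (leqnn _); rewrite r_const hornerC => r0_eq0.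
by rewrite r0_eq0 polyC0.
Qed.

Section MatrixRank.
Variable F : fieldType.

Lemma mxrank_sandwich m n p (A : 'M[F]_(m, n)) (A' : 'M[F]_(n, m))
    (B : 'M[F]_(n, p)) (B' : 'M[F]_(p, n)) (Y : 'M[F]_n) :
  A' *m A = 1%:M -> B *m B' = 1%:M -> \rank (A *m Y *m B) = \rank Y.
Proof.
move=> A'A BB'; have rank_mulLR m' p' (C : 'M[F]_(m', _)) Z (D : 'M[F]_(_, p')) :
  (\rank (C *m Z *m D) <= \rank Z)%N by exact: leq_trans (mxrankM_maxl _ _) (mxrankM_maxr _ _).
have defY : Y = A' *m (A *m Y *m B) *m B'.
  by rewrite !mulmxA A'A mul1mx -mulmxA BB' mulmx1.
by apply/eqP; rewrite eqn_leq rank_mulLR {1}defY rank_mulLR.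
Qed.


Lemma sub_rows_of_rank_leq m n r (D : 'M[F]_(m, n)) : (\rank D <= r)%N ->
  exists V : 'M[F]_(r, n), (D <= V)%MS.
Proof.
move=> rankD; exists (castmx (subnKC rankD, erefl n) (col_mx (row_base D) 0)).
by rewrite eqmx_cast -addsmxE addsmx0 eq_row_base.
Qed.

Lemma mxrank_diff m1 m2 n (A : 'M[F]_(m1, n)) (B : 'M[F]_(m2, n)) :
  \rank (A :\: B)%MS = (\rank (A + B)%MS - \rank B)%N.
Proof. have := mxrank_cap_compl A B; have := mxrank_sum_cap A B; lia. Qed.

Lemma sub_adds_rows m1 m2 n r (A : 'M[F]_(m1, n)) (B : 'M[F]_(m2, n)) :
  (\rank (A + B)%MS - \rank B <= r)%N -> exists V : 'M[F]_(r, n), (A <= B + V)%MS.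
Proof.
rewrite -mxrank_diff => /sub_rows_of_rank_leq [V diff_sub]; exists V.
by rewrite -{1}(addsmx_diff_cap_eq A B) addsmxC addsmxS ?capmxSr.
Qed.

Lemma sub1_mul_tr_sub n (a b : 'M[F]_n) :
  ((a *m b - 1%:M)^T <= (a - 1%:M)^T + (b - 1%:M)^T)%MS.
Proof.
have -> : (a *m b - 1%:M)^T = b^T *m (a - 1%:M)^T + (b - 1%:M)^T.
  by rewrite -trmx_mul -linearD /= mulmxBl mul1mx addrA subrK.
by rewrite addmx_sub_adds ?submxMl.
Qed.

Lemma mxrank_sub1_mul n (a b : 'M[F]_n) :
  (\rank (a *m b - 1%:M)%R <= \rank (a - 1%:M)%R + \rank (b - 1%:M)%R)%N.
Proof.
have := leq_trans (mxrankS (sub1_mul_tr_sub a b)) (mxrank_adds_leqif _ _).1.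
by rewrite !mxrank_tr.
Qed.

End MatrixRank.

Section UnitaryFactor.
Variables (F : fieldType) (s : {rmorphism F -> F}).

Lemma unitary_sub1_factor n k (a : 'M[F]_n) (Z : 'M[F]_(k, n)) :
  a^T *m map_mx s a = 1%:M -> row_free Z -> ((a - 1%:M)^T <= Z)%MS ->
  exists M : 'M[F]_k, a - 1%:M = Z^T *m M *m map_mx s Z.
Proof.
move=> a_unitary /row_freeP [L ZL] /submxP [C defAT].
have AT : (a - 1%:M)^T = - (map_mx s (a - 1%:M) *m a^T).
  by rewrite map_mxB map_mx1 mulmxBl (mulmx1C a_unitary) mul1mx opprB linearB /= trmx1.
have A_left : a - 1%:M = Z^T *m C^T by rewrite -[LHS]trmxK defAT trmx_mul.
have A_right : a - 1%:M = - (a *m map_mx s C) *m map_mx s Z.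
  by rewrite -[LHS]trmxK AT linearN /= trmx_mul trmxK map_trmx defAT map_mxM mulNmx mulmxA.
have CT : C^T = L^T *m (a - 1%:M) by rewrite A_left mulmxA -trmx_mul ZL trmx1 mul1mx.
by exists (L^T *m - (a *m map_mx s C)); rewrite {1}A_left CT {1}A_right !mulmxA.
Qed.

Definition near_id n k m r (G : 'M[F]_(m, n)) (T : 'M[F]_(k, m + r)) (V : 'M[F]_(r, n))
    (M : 'M[F]_k) : 'M[F]_n :=
  let W := T *m col_mx G V in 1%:M + W^T *m M *m map_mx s W.

Lemma unitary_left_factor_near_id n (a b g : 'M[F]_n) (k l : nat) :
  a^T *m map_mx s a = 1%:M -> a *m b = g ->
  \rank (a - 1%:M) = k -> (\rank (b - 1%:M)%R <= l)%N ->
  let G := row_base (g - 1%:M)^T in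
  exists (T : 'M[F]_(k, _)) (V : 'M[F]_(k + l - \rank (g - 1%:M)^T, n)) (M : 'M[F]_k),
    a = near_id G T V M.
Proof.
move=> a_unitary def_g rank_a rank_b G.
set A := (a - 1%:M)^T; set GT := (g - 1%:M)^T.
have rank_AG : (\rank (A + GT) - \rank GT <= k + l - \rank GT)%N.
  rewrite leq_sub2r // /GT -def_g.
  apply: leq_trans (mxrankS (_ : _ <= A + (b - 1%:M)^T)%MS) _.
    by rewrite addsmx_sub addsmxSl sub1_mul_tr_sub.
  by apply: leq_trans (mxrank_adds_leqif _ _).1 _; rewrite !mxrank_tr rank_a leq_add2l.
have [V sub_AV] := sub_adds_rows rank_AG.
have [Z eqZ] : exists Z : 'M[F]_(k, n), (Z :=: A)%MS.
  by rewrite -rank_a -mxrank_tr; exists (row_base A); exact: eq_row_base.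
have Z_free : row_free Z by rewrite /row_free eqZ mxrank_tr rank_a.
have [M defA] : exists M, a - 1%:M = Z^T *m M *m map_mx s Z.
  by apply: unitary_sub1_factor; rewrite ?eqZ.
have /submxP [T defZ] : (Z <= col_mx G V)%MS.
  rewrite -addsmxE eqZ; apply: submx_trans sub_AV _.
  by rewrite addsmxS ?eq_row_base.
by exists T, V, M; rewrite /near_id -defZ -defA addrC subrK.
Qed.

End UnitaryFactor.

Section Embedding.
Variables (F : finFieldType) (n N : nat).

Local Notation P := (pid_mx n : 'M[F]_(N, n)).
Local Notation P' := (pid_mx n : 'M[F]_(n, N)).

Lemma pid_mulmxE m (y : 'M[F]_(n, m)) i k :
  (P *m y) i k = oapp (fun i' => y i' k) 0 (insub (val i)).
Proof.
rewrite mxE; case: insubP => [i' _ def_i | ge_in] /=.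
  rewrite (bigD1 i') //= big1 => [|l ne_l]; first by rewrite mxE -def_i eqxx ltn_ord mul1r addr0.
  by rewrite mxE -def_i (inj_eq val_inj) eq_sym (negbTE ne_l) mul0r.
by rewrite big1 // => l _; rewrite mxE (negbTE ge_in) andbF mul0r.
Qed.

Lemma mulmx_pidE m (y : 'M[F]_(m, n)) i j :
  (y *m P') i j = oapp (y i) 0 (insub (val j)).
Proof.
have -> : (y *m P') i j = (P *m y^T) j i.
  by rewrite -(tr_pid_mx F n N) -trmx_mul [RHS]mxE.
by rewrite pid_mulmxE; case: insub => //= j'; rewrite mxE.
Qed.

Lemma embedE (x : 'M[F]_n) : embed N x = P *m x *m P' + copid_mx n.
Proof.
apply/matrixP => i j; rewrite [LHS]mxE [RHS]mxE mulmx_pidE [copid_mx _ _ _]mxE !mxE.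
case: (@insubP _ _ 'I_n (val j)) => [j' lt_jn def_j | ge_jn] /=;
  rewrite ?pid_mulmxE; case: insubP => [i' lt_in def_i | ge_in] /=.
- by rewrite lt_in andbT subrr addr0.
- by rewrite (negbTE ge_in) andbF subr0 add0r mulrb.
- rewrite lt_in andbT subrr addr0; case: eqP => // eq_ij.
  by move: ge_jn => /=; rewrite -eq_ij lt_in.
- by rewrite (negbTE ge_in) andbF subr0 add0r mulrb.
Qed.


Lemma embed_id (x : 'M[F]_n) : embed n x = x.
Proof. by apply/matrixP => i j; rewrite mxE !valK. Qed.

Hypothesis le_nN : (n <= N)%N.

Lemma embed_mul (x y : 'M[F]_n) : embed N (x *m y) = embed N x *m embed N y.
Proof.
have PP : P' *m P = 1%:M by rewrite pid_mx_id ?pid_mx_1.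
rewrite !embedE mulmxDl !(mulmxDr _ _ (copid_mx n)) copid_mx_id //.
rewrite -!mulmxA mul_pid_mx_copid // !mulmx0 addr0.
rewrite !mulmxA mul_copid_mx_pid // !mul0mx add0r.
by rewrite -!mulmxA (mulmxA P') PP mul1mx.
Qed.

Lemma embed1 : embed N (1%:M : 'M[F]_n) = 1%:M.
Proof. by rewrite embedE mulmx1 pid_mx_id // addrC subrK. Qed.

Lemma embed_tr (x : 'M[F]_n) : embed N x^T = (embed N x)^T.
Proof.
by rewrite !embedE linearD /= !trmx_mul !tr_pid_mx mulmxA linearB /= trmx1 tr_pid_mx.
Qed.

Lemma map_embed (f : {rmorphism F -> F}) (x : 'M[F]_n) :
  map_mx f (embed N x) = embed N (map_mx f x).
Proof. by rewrite !embedE map_mxD !map_mxM map_copid_mx !map_pid_mx. Qed.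

Lemma mxrank_embed_sub1 (x : 'M[F]_n) :
  \rank (embed N x - 1%:M) = \rank (x - 1%:M).
Proof.
have -> : embed N x - 1%:M = P *m (x - 1%:M) *m P'.
  by rewrite -embed1 !embedE mulmxBr mulmxBl opprD addrACA subrr addr0.
by rewrite (mxrank_sandwich (A' := P') (B' := P)) // pid_mx_id ?pid_mx_1.
Qed.
End Embedding.

Section Frobenius.
Variables (F : finFieldType) (q : nat).
Hypothesis card_F : #|F| = (q ^ 2)%N.

Lemma pnat_pchar_sqrt_card : [pchar F].-nat q.
Proof.
have [p p_prime pchar_p] := finPcharP F.
have : pgroup p [set: F] := abelem_pgroup (fin_ring_pchar_abelem pchar_p).
rewrite /pgroup cardsT card_F pnatX orbF => /sub_in_pnat; apply=> d _.
by rewrite !inE => /eqP ->.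
Qed.

Lemma sqrt_card_gt1 : (1 < q)%N.
Proof. by have := finNzRing_gt1 F; rewrite card_F; case: q => [|[]]. Qed.

Lemma sigma_is_nmod_morphism : nmod_morphism (sigma (F:=F) q).
Proof.
split; first by rewrite /sigma expr0n; case: q sqrt_card_gt1.
by move=> x y; rewrite /sigma exprDn_pchar ?pnat_pchar_sqrt_card.
Qed.

Lemma sigma_is_monoid_morphism : GRing.monoid_morphism (sigma (F:=F) q).
Proof. by split=> [|x y]; rewrite /sigma ?expr1n ?exprMn. Qed.

End Frobenius.

Section StructureConstant.
Variables (F : finFieldType) (q : nat).
Hypothesis card_F : #|F| = (q ^ 2)%N.

HB.instance Definition _ := GRing.isNmodMorphism.Build F F (sigma (F:=F) q)
  (sigma_is_nmod_morphism card_F).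
HB.instance Definition _ := GRing.isMonoidMorphism.Build F F (sigma (F:=F) q)
  (@sigma_is_monoid_morphism F q).

Lemma unitary_embed n N (x : 'M[F]_n) : (n <= N)%N ->
  unitary q x -> unitary q (embed N x).
Proof.
move=> le_nN /eqP x_unitary.
by rewrite /unitary -embed_tr // map_embed -embed_mul // x_unitary embed1.
Qed.

Lemma unitary_unit n (h : 'M[F]_n) : unitary q h -> h \in unitmx.
Proof. by move=> /eqP /mulmx1_unit [+ _]; rewrite unitmx_tr. Qed.

Lemma has_type_rank n (a : 'M[F]_n) (mu : utype F q) :
  has_type a mu -> \rank (a - 1%:M) = usize mu.
Proof.
case=> _ [N [le_mu_N le_nN [h [h_unitary conj_h]]]].
have h_unit := unitary_unit h_unitary.
rewrite /usize -(mxrank_embed_sub1 le_nN) conj_h -(mxrank_embed_sub1 le_mu_N).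
set E := embed N (ut_g mu).
have -> : h *m E *m invmx h - 1%:M = h *m (E - 1%:M) *m invmx h.
  by rewrite mulmxBr mulmxBl mulmx1 mulmxV.
by rewrite (mxrank_sandwich (A' := invmx h) (B' := h)) ?mulVmx.
Qed.

Lemma has_type_embed n (lam : utype F q) : (ut_n lam <= n)%N ->
  has_type (embed n (ut_g lam)) lam.
Proof.
move=> le_n; split; first exact: unitary_embed (ut_unitary lam).
exists n; split => //; exists 1%:M; split.
  by rewrite /unitary trmx1 map_mx1 mulmx1.
by rewrite embed_id invmx1 mul1mx mulmx1.
Qed.

Section Count.
Variables (mu nu : utype F q) (n : nat) (g : 'M[F]_n).

Definition left_factors : {set 'M[F]_n} :=
  [set a | `[< has_type a mu >] && `[< has_type (invmx a *m g) nu >]].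

Lemma galg_X_card : galg_mul (X mu n) (X nu n) g = #|left_factors|%:R.
Proof.
rewrite ffunE -sum1_card natr_sum [RHS]big_mkcond /=; apply: eq_bigr => a _.
rewrite inE; case: (boolP `[< has_type a mu >]) => [a_mu | not_a_mu] /=; last first.
  by rewrite big1 // => b _; rewrite ffunE (negbTE not_a_mu) mul0r.
have a_unit : a \in unitmx by apply: unitary_unit; case/asboolP: a_mu.
rewrite (big_pred1 (invmx a *m g)) => [|b]; last first.
  by apply/eqP/eqP => [<- | ->]; rewrite ?mulKmx ?mulKVmx.
by rewrite !ffunE a_mu mul1r; case: `[< _ >].
Qed.

Let k := usize mu.
Let rr := (k + usize nu - \rank (g - 1%:M)%R)%N.

Lemma card_left_factors_le :
  (#|left_factors|
     <= #|F| ^ (k * (\rank (g - 1%:M)%R + rr)) * #|F| ^ (rr * n) * #|F| ^ (k * k))%N.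
Proof.
pose param (t : 'M[F]_(k, \rank (g - 1%:M)^T + (k + usize nu - \rank (g - 1%:M)^T))
    * 'M[F]_(k + usize nu - \rank (g - 1%:M)^T, n) * 'M[F]_k) :=
  near_id (sigma q) (row_base (g - 1%:M)^T) t.1.1 t.1.2 t.2.
have sub_param : left_factors \subset [set param t | t in setT].
  apply/subsetP => a; rewrite inE => /andP [/asboolP a_mu /asboolP b_nu].
  have a_unit : a \in unitmx by apply: unitary_unit; case: a_mu.
  have [T [V [M ->]]] := unitary_left_factor_near_id (eqP (proj1 a_mu))
    (mulKVmx a_unit g) (has_type_rank a_mu) (eq_leq (has_type_rank b_nu)).
  by apply/imsetP; exists (T, V, M).
apply: leq_trans (subset_leq_card sub_param) _.
apply: leq_trans (leq_imset_card _ _) _.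
by rewrite cardsT !card_prod !card_mx mxrank_tr.
Qed.

Lemma galg_X_eq0 : (usize mu + usize nu < \rank (g - 1%:M)%R)%N ->
  galg_mul (X mu n) (X nu n) g = 0.
Proof.
move=> rank_g; rewrite galg_X_card; apply/eqP; rewrite pnatr_eq0 cards_eq0.
apply/eqP/setP => a; rewrite !inE; apply/negP => /andP [/asboolP a_mu /asboolP b_nu].
have a_unit : a \in unitmx by apply: unitary_unit; case: a_mu.
move: rank_g; rewrite -(mulKVmx a_unit g) -(has_type_rank a_mu) -(has_type_rank b_nu).
by rewrite ltnNge mxrank_sub1_mul.
Qed.

End Count.
End StructureConstant.

Theorem lemma8p6 (F : finFieldType) (q : nat) (hF : #|F| = (q ^ 2)%N)
    (mu nu lam : utype F q) (r : {poly rat}) :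
  is_struct_const mu nu lam r ->
  r != 0 ->
  ((size r).-1%:Z <= 2 * ((usize mu)%:Z + (usize nu)%:Z - (usize lam)%:Z))%R.
Proof.
move=> r_struct r_neq0.
have q_gt1 := sqrt_card_gt1 hF.
set k := usize mu; set l := usize nu; set m := usize lam.
have r_value n : (ut_n lam <= n)%N ->
    r.[qint q n] = galg_mul (X mu n) (X nu n) (embed n (ut_g lam)).
  by move=> le_n; rewrite (r_struct n _ (has_type_embed hF le_n)).
have rank_lam n : (ut_n lam <= n)%N -> \rank (embed n (ut_g lam) - 1%:M) = m.
  by move=> le_n; rewrite mxrank_embed_sub1.
have [le_m | lt_m] := leqP m (k + l); last first.
  case/eqP: r_neq0; apply: (poly_eq0_of_qint_roots (n0 := ut_n lam) q_gt1) => n le_n.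
  by rewrite r_value // galg_X_eq0 ?rank_lam.
suff : ((size r).-1 <= 2 * (k + l - m))%N by lia.
pose C : rat := (#|F| ^ (k * (m + (k + l - m))) * #|F| ^ (k * k))%:R.
apply: (size_poly_le_of_qint_bound (C := C) (n0 := ut_n lam) q_gt1) => // n le_n.
rewrite r_value // galg_X_card normr_nat -natrM ler_nat -hF mulnAC.
by have := card_left_factors_le hF mu nu (embed n (ut_g lam)); rewrite rank_lam.
Qed.
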